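(* Let $X$ be a regular Lusin space and let $f:X\to\mathbb{R}$ be quasicontinuous. Then the set $D_f=\{x\in X: f \text{ is discontinuous at } x\}$ is countable.
   Context: All spaces are assumed regular. A Hausdorff space $X$ is a Lusin space (in the sense of Kunen) if (a) every nowhere dense subset of $X$ is countable, (b) $X$ has at most countably many isolated points, and (c) $X$ is uncountable. A function $f:X\to Y$ is quasicontinuous if for every $x\in X$, every open $V\ni f(x)$ and every open $U\ni x$ there is a nonempty open $W\subseteq U$ with $f(W)\subseteq V$. *)

From HB Require Import structures.
From mathcomp Require Import all_boot all_order all_algebra.
From mathcomp Require Import all_classical all_reals all_analysis.
Set Implicit Arguments. Unset Strict Implicit. Unset Printing Implicit Defensive.
Import Order.TTheory GRing.Theory Num.Theory.
Local Open Scope classical_set_scope.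

Definition nowhere_dense (T : topologicalType) (A : set T) : Prop :=
  (closure A)^° = set0.

(* Lusin space in the sense of Kunen (Hausdorff assumed separately). *)
Definition lusin_space (T : topologicalType) : Prop :=
  [/\ (forall A : set T, nowhere_dense A -> countable A),
      countable [set x : T | isolated setT x] &
      ~ countable [set: T]].

Definition quasicontinuous (T U : topologicalType) (f : T -> U) : Prop :=
  forall (x : T) (V : set U) (O : set T),
    open V -> V (f x) -> open O -> O x ->
    exists W : set T, [/\ open W, W !=set0, W `<=` O & f @` W `<=` V].

(* For [e > 0] let [osc_ge f e] be the set of points at which [f] oscillates
   by at least [e]. Quasicontinuity gives, inside every nonempty open set, a
   nonempty open set on which [f] varies by less than [e]; hence [osc_ge f e]
   is nowhere dense and, [X] being Lusin, countable. The discontinuity points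
   of [f] are the union of the sets [osc_ge f (n.+1)^-1]. *)
From HB Require Import structures.
From mathcomp Require Import all_boot all_order all_algebra.
From mathcomp Require Import all_classical all_reals all_analysis.
From mathcomp Require Import lra.
Import numFieldNormedType.Exports.
Local Open Scope classical_set_scope.
Local Open Scope ring_scope.
Import Order.TTheory GRing.Theory Num.Theory.

Lemma lusin_bigcup_nowhere_dense_countable (X : topologicalType)
    (A : nat -> set X) :
  lusin_space X -> (forall n, nowhere_dense (A n)) ->
  countable (\bigcup_n A n).
Proof.
move=> [nd_countable _ _] ndA.
by apply: bigcup_countable => // n _; apply: nd_countable.
Qed.

Section oscillation.
Variables (R : realFieldType) (X : topologicalType) (f : X -> R).

Definition osc_ge (e : R) : set X :=
  [set x | forall U, nbhs x U -> exists y z, [/\ U y, U z & e <= `|f y - f z|]].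

Lemma osc_ge_le (e e' : R) : e' <= e -> osc_ge e `<=` osc_ge e'.
Proof.
move=> e'e x oscx U Ux; have [y [z [Uy Uz fyz]]] := oscx U Ux.
by exists y, z; split => //; apply: le_trans fyz.
Qed.

Lemma continuous_at_osc_ge (x : X) :
  (forall e, 0 < e -> ~ osc_ge e x) -> {for x, continuous f}.
Proof.
move=> not_osc; apply/cvgrPdist_lt => e e0.
have /existsNP[U /not_implyP[Ux small_osc]] := not_osc e e0.
apply: (filterS _ Ux) => t Ut /=; rewrite ltNge; apply/negP => fxt.
by apply: small_osc; exists x, t; split => //; exact: nbhs_singleton.
Qed.

Lemma quasicontinuous_osc_ge_nowhere_dense (e : R) :
  quasicontinuous f -> 0 < e -> nowhere_dense (osc_ge e).
Proof.
move=> qcf e0; apply/seteqP; split => // x /=.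
rewrite /interior nbhsE => -[U [oU Ux] Ucl].
have e20 : 0 < e / 2 by rewrite divr_gt0.
have [W [oW [w Ww] WU fW]] :=
  qcf x _ _ (ball_open (f x) (e / 2)) (ballxx _ e20) oU Ux.
have [a [osca Wa]] := Ucl w (WU w Ww) W (open_nbhs_nbhs (conj oW Ww)).
have [y [z [Wy Wz fyz]]] := osca W (open_nbhs_nbhs (conj oW Wa)).
have /= fxy : `|f x - f y| < e / 2 by apply: fW; exists y.
have /= fxz : `|f x - f z| < e / 2 by apply: fW; exists z.
suff : `|f y - f z| < e by rewrite ltNge fyz.
apply: le_lt_trans (ler_distD (f x) _ _) _.
by rewrite distrC; lra.
Qed.

End oscillation.

Arguments osc_ge {R X} f e.

Lemma discontinuity_sub_bigcup_osc_ge {R : realType} {X : topologicalType}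
    (f : X -> R) :
  [set x | ~ {for x, continuous f}] `<=` \bigcup_n osc_ge f n.+1%:R^-1.
Proof.
move=> x /= discont; apply: contrapT => not_osc; apply/discont.
apply: continuous_at_osc_ge => e e0 oscx.
have [n _ /(_ n (leqnn n)) ne] := near_infty_natSinv_lt (PosNum e0).
by apply: not_osc; exists n => //; apply: osc_ge_le oscx; apply: ltW.
Qed.

Theorem corollary3p5 (R : realType) (X : topologicalType) (f : X -> R) :
  hausdorff_space X -> regular_space X -> lusin_space X ->
  quasicontinuous f ->
  countable [set x : X | ~ {for x, continuous f}].
Proof.
move=> _ _ lusinX qcf.
apply: (sub_countable (subset_card_le (discontinuity_sub_bigcup_osc_ge f))).
apply: lusin_bigcup_nowhere_dense_countable => // n.
exact: quasicontinuous_osc_ge_nowhere_dense.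
Qed.
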